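(* Let $\alpha,\beta\in\mathbb{R}$ satisfy $4<\alpha^2<6$ and $\frac{4}{100}<\beta<\frac{165}{100}$, and let $q_{\alpha,\beta}(w)=w^4+\alpha w^3+(\beta-4)w^2-\alpha w+3$ for $w\in\mathbb{C}$. Then $q_{\alpha,\beta}$ has $4$ pairwise different roots, exactly $2$ of which are real, and the remaining $2$ are non-real and complex conjugate to each other. *)

From HB Require Import structures.
From mathcomp Require Import all_boot all_order all_algebra.
From mathcomp Require Import complex reals.
Set Implicit Arguments. Unset Strict Implicit. Unset Printing Implicit Defensive.
Import Order.TTheory GRing.Theory Num.Theory ComplexField.
Local Open Scope ring_scope.
Local Open Scope complex_scope.

Definition q_ab (R : realType) (a b : R) : {poly R[i]} :=
  'X^4 + (a%:C)%:P * 'X^3 + ((b - 4)%:C)%:P * 'X^2 - (a%:C)%:P * 'X + 3%:P.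

(* For a > 0 (the case a < 0 follows from q_{-a}(x) = q_a(-x)) the real quartic
   q changes sign on ]-4, -2[ and on ]-2, -1[, giving real roots r1 < -2 < r2 < -1,
   and q > 0 on [0, +oo).  Dividing q by (x - r1)(x - r2) leaves a monic quadratic
   x^2 + s x + t with s = a + r1 + r2 < 0.  At its vertex -s/2 > 0 both q and
   (x - r1)(x - r2) are positive, hence so is the quadratic: its discriminant is
   negative and its roots form a pair of non-real complex conjugates. *)

From HB Require Import structures.
From mathcomp Require Import all_boot all_order all_algebra.
From mathcomp Require Import complex reals polyrcf ring lra.
Set Implicit Arguments. Unset Strict Implicit. Unset Printing Implicit Defensive.
Import Order.TTheory GRing.Theory Num.Theory ComplexField.
Local Open Scope ring_scope.

Definition monic_quartic (F : nzRingType) (c3 c2 c1 c0 : F) : {poly F} :=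
  'X^4 + c3%:P * 'X^3 + c2%:P * 'X^2 + c1%:P * 'X + c0%:P.

Section QuarticFactor.
Variables (F : idomainType) (c3 c2 c1 c0 : F).
Local Notation p := (monic_quartic c3 c2 c1 c0).

Lemma monic_quartic_factor r1 r2 : r1 != r2 -> root p r1 -> root p r2 ->
  exists t, p = ('X - r1%:P) * ('X - r2%:P) * ('X^2 + (c3 + r1 + r2)%:P * 'X + t%:P).
Proof.
move=> r12 root_r1 root_r2.
set s := c3 + r1 + r2; set t := c2 + (r1 + r2) * s - r1 * r2.
set e1 := c1 + (r1 + r2) * t - r1 * r2 * s; set e0 := c0 - r1 * r2 * t.
have divmod : p = ('X - r1%:P) * ('X - r2%:P) * ('X^2 + s%:P * 'X + t%:P) + e1%:P * 'X + e0%:P.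
  by rewrite /monic_quartic /e1 /e0 /t /s; ring.
have remainder_root r : root p r -> (r - r1) * (r - r2) = 0 -> e1 * r + e0 = 0.
  by rewrite divmod => /rootP; rewrite !hornerE => + r_r12; rewrite r_r12 mul0r add0r.
have e1r1 : e1 * r1 + e0 = 0 by apply: remainder_root; rewrite // subrr mul0r.
have e1r2 : e1 * r2 + e0 = 0 by apply: remainder_root; rewrite // subrr mulr0.
have e1_0 : e1 = 0.
  have : e1 * (r1 - r2) = (e1 * r1 + e0) - (e1 * r2 + e0) by ring.
  rewrite e1r1 e1r2 subrr => /eqP.
  by rewrite mulf_eq0 (subr_eq0 r1) (negPf r12) orbF => /eqP.
have e0_0 : e0 = 0 by move: e1r1; rewrite e1_0 mul0r add0r.
by exists t; rewrite divmod e1_0 e0_0 mul0r !addr0.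
Qed.

End QuarticFactor.

Section QuarticIrreducibleFactor.
Variables (F : realFieldType) (c3 c2 c1 c0 : F).
Local Notation p := (monic_quartic c3 c2 c1 c0).

Lemma monic_quartic_irreducible_factor r1 r2 s :
  r1 != r2 -> root p r1 -> root p r2 -> c3 + r1 + r2 = s ->
  0 < (- s / 2 - r1) * (- s / 2 - r2) -> 0 < p.[- s / 2] ->
  exists2 t, s ^+ 2 < 4 * t &
    p = ('X - r1%:P) * ('X - r2%:P) * ('X^2 + s%:P * 'X + t%:P).
Proof.
move=> r12 root_r1 root_r2 s_def roots_gt0.
have [t] := monic_quartic_factor r12 root_r1 root_r2; rewrite s_def => ->.
rewrite !hornerM !hornerXsubC pmulr_rgt0 // !hornerD hornerXn hornerM !hornerC hornerX.
move=> vertex_gt0; exists t => //.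
rewrite -subr_gt0 (_ : 4 * t - s ^+ 2 = 4 * ((- s / 2) ^+ 2 + s * (- s / 2) + t)).
  by rewrite mulr_gt0.
by field.
Qed.

End QuarticIrreducibleFactor.

Local Open Scope complex_scope.

Lemma quadratic_conj_factor (R : rcfType) (s t : R) : s ^+ 2 < 4 * t ->
  exists2 z : R[i], Im z != 0 &
    map_poly (real_complex R) ('X^2 + s%:P * 'X + t%:P) = ('X - z%:P) * ('X - (z^*)%:P).
Proof.
move=> disc_lt0.
set d := Num.sqrt (4 * t - s ^+ 2).
have d_gt0 : 0 < d by rewrite sqrtr_gt0 subr_gt0.
have d2 : d ^+ 2 = 4 * t - s ^+ 2 by rewrite sqr_sqrtr // subr_ge0 ltW.
pose z := (- s / 2) +i* (d / 2).
have s_zDzc : s%:C = - (z + z^*).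
  by apply/eqP; simpc; apply/eqP; congr (_ +i* _); field.
have t_zMzc : t%:C = z * z^*.
  apply/eqP; simpc; apply/eqP; congr (_ +i* _); last by ring.
  by transitivity ((s ^+ 2 + d ^+ 2) / 4); [rewrite d2; field | field].
exists z; first by rewrite -complexIm /= fmorph_eq0 gt_eqF //; lra.
rewrite !rmorphD !rmorphM /= map_polyX !map_polyC /= s_zDzc t_zMzc; ring.
Qed.

Section RealQuartic.
Variable R : realType.
Implicit Types a b x : R.

Definition q_real a b : {poly R} := monic_quartic a (b - 4) (- a) 3.

Lemma q_abE a b : q_ab a b = map_poly (real_complex R) (q_real a b).
Proof.
rewrite /q_ab /q_real /monic_quartic.
by rewrite !(rmorphD, rmorphM, rmorphXn) /= !map_polyX !map_polyC /=; ring.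
Qed.

Lemma horner_q_real a b x :
  (q_real a b).[x] = x ^+ 4 + a * x ^+ 3 + (b - 4) * x ^+ 2 - a * x + 3.
Proof. by rewrite !hornerE mulNr. Qed.

Lemma horner_q_realN a b x : (q_real (- a) b).[x] = (q_real a b).[- x].
Proof. by rewrite !horner_q_real; ring. Qed.

(* On [0, 1] the parameters (245/100, 4/100) minimise q over the admissible box;
   the minimum is attained near x = 95/100. *)
Lemma q_real_extremal_gt0 x : 0 <= x <= 1 -> 0 < (q_real (245 / 100) (4 / 100)).[x].
Proof.
move=> /andP[x_ge0 x_le1]; rewrite horner_q_real.
have := sqr_ge0 (x - 95 / 100); nra.
Qed.

Lemma q_real_gt0 a b x :
  2 < a < 245 / 100 -> 4 / 100 < b -> 0 <= x -> 0 < (q_real a b).[x].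
Proof.
move=> /andP[a_gt2 a_lt] b_gt x_ge0.
have [x_le1 | x_gt1] := lerP x 1.
  have q_ge : (q_real (245 / 100) (4 / 100)).[x] <= (q_real a b).[x].
    rewrite -subr_ge0.
    have -> : (q_real a b).[x] - (q_real (245 / 100) (4 / 100)).[x] =
              (245 / 100 - a) * (x * (1 - x ^+ 2)) + (b - 4 / 100) * x ^+ 2.
      by rewrite !horner_q_real; ring.
    by rewrite addr_ge0 ?mulr_ge0 ?sqr_ge0 // subr_ge0 ?exprn_ile1 // ltW.
  by apply: lt_le_trans q_ge; apply: q_real_extremal_gt0; rewrite x_ge0.
have -> : (q_real a b).[x] = (x ^+ 2 - 1) * (x ^+ 2 + a * x - 3) + b * x ^+ 2.
  by rewrite horner_q_real; ring.
have x2_gt1 : 1 < x ^+ 2 by rewrite expr2; nra.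
have lin_gt0 : 0 < x ^+ 2 + a * x - 3 by nra.
by rewrite addr_gt0 ?mulr_gt0 ?subr_gt0 //; lra.
Qed.

Lemma q_real_neg_roots a b : 2 < a < 245 / 100 -> 4 / 100 < b < 165 / 100 ->
  exists r1 r2, [/\ root (q_real a b) r1, root (q_real a b) r2,
                    r1 < -2, -2 < r2 & r2 < -1].
Proof.
move=> /andP[a_gt2 a_lt] /andP[b_gt b_lt].
have q_m4 : (q_real a b).[-4] = 195 - 60 * a + 16 * b by rewrite horner_q_real; ring.
have q_m2 : (q_real a b).[-2] = 3 - 6 * a + 4 * b by rewrite horner_q_real; ring.
have q_m1 : (q_real a b).[-1] = b by rewrite horner_q_real; ring.
have [r1 /andP[_ r1_lt] root_r1] : {r | r \in `]-4, -2[ & root (q_real a b) r}.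
  by apply: poly_ivtoo; rewrite ?q_m4 ?q_m2 ?pmulr_rlt0; lra.
have [r2 /andP[r2_gt r2_lt] root_r2] : {r | r \in `]-2, -1[ & root (q_real a b) r}.
  by apply: poly_ivtoo; rewrite ?q_m2 ?q_m1 ?nmulr_rlt0; lra.
by exists r1, r2.
Qed.

Lemma q_real_split a b : 4 < a ^+ 2 < 6 -> 4 / 100 < b < 165 / 100 ->
  exists r1 r2 s t, [/\ r1 != r2, s ^+ 2 < 4 * t &
    q_real a b = ('X - r1%:P) * ('X - r2%:P) * ('X^2 + s%:P * 'X + t%:P)].
Proof.
move=> /andP[a2_gt4 a2_lt6] b_bounds.
have [a_gt0 | a_le0] := ltP 0 a.
  have a_bounds : 2 < a < 245 / 100 by apply/andP; split; nra.
  have [r1 [r2 [root_r1 root_r2 r1_lt r2_gt r2_lt]]] := q_real_neg_roots a_bounds b_bounds.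
  have r12 : r1 != r2 by rewrite lt_eqF // (lt_trans r1_lt).
  have [||t disc fact] := monic_quartic_irreducible_factor r12 root_r1 root_r2 (erefl _).
  - by rewrite mulr_gt0 //; lra.
  - by apply: q_real_gt0 => //; lra.
  by exists r1, r2, (a + r1 + r2), t.
have a_bounds : 2 < - a < 245 / 100 by apply/andP; split; nra.
have [r1 [r2 [root_r1 root_r2 r1_lt r2_gt r2_lt]]] := q_real_neg_roots a_bounds b_bounds.
have root_opp r : root (q_real (- a) b) r -> root (q_real a b) (- r).
  by rewrite /root horner_q_realN.
have r12 : - r1 != - r2 by rewrite eqr_opp lt_eqF // (lt_trans r1_lt).
have [||t disc fact] := monic_quartic_irreducible_factor r12
  (root_opp _ root_r1) (root_opp _ root_r2) (erefl _).
- by rewrite nmulr_rgt0; lra.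
- by rewrite -[_ / 2]opprK -horner_q_realN; apply: q_real_gt0 => //; lra.
by exists (- r1), (- r2), (a - r1 - r2), t.
Qed.

End RealQuartic.

Theorem mainTheorem2 (R : realType) (a b : R) :
  4 < a ^+ 2 < 6 -> 4 / 100 < b < 165 / 100 ->
  exists (r1 r2 : R) (z : R[i]),
    [/\ r1 <> r2, Im z != 0, r1%:C <> z, r2%:C <> z &
     forall w : R[i], root (q_ab a b) w <->
       [\/ w = r1%:C, w = r2%:C, w = z | w = z^*]].
Proof.
move=> a_bounds b_bounds.
have [r1 [r2 [s [t [r12 disc q_fact]]]]] := q_real_split a_bounds b_bounds.
have [z Im_z quad_fact] := quadratic_conj_factor disc.
have real_neq_z r : r%:C <> z by move=> rz; move: Im_z; rewrite -rz -complexIm eqxx.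
exists r1, r2, z; split => //; first exact/eqP.
move=> w; rewrite q_abE q_fact !rmorphM /= !map_polyXsubC quad_fact.
rewrite !rootM !root_XsubC -!orbA; split.
  by case/or4P => /eqP ->; [apply: Or41 | apply: Or42 | apply: Or43 | apply: Or44].
by case=> ->; rewrite eqxx ?orbT.
Qed.
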